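(* Let $(q_n)_{n \ge 1}$ be a sequence of positive rational numbers, and let $(p_n)_{n \ge 1}$ be a sequence of prime numbers such that, for every $n \in \mathbb{N}$, $p_n \mid \mathsf{d}(q_n)$ and $p_n \nmid \mathsf{d}(q_k)$ for every $k \in \mathbb{N}$ with $k \neq n$. Then the Puiseux monoid $M = \langle q_n \mid n \in \mathbb{N} \rangle$ is atomic and its set of atoms is $\mathcal{A}(M) = \{ q_n \mid n \in \mathbb{N} \}$.
   Context: For a positive rational $r = n/d$ with $n,d \in \mathbb{N}$ and $\gcd(n,d)=1$, write $\mathsf{n}(r) := n$ and $\mathsf{d}(r) := d$. A Puiseux monoid is an additive submonoid of $(\mathbb{Q}_{\ge 0},+)$; $\langle S \rangle$ denotes the submonoid generated by $S$. An atom of a (reduced, additive) monoid $M$ is a nonzero element $a$ such that $a = x + y$ with $x,y \in M$ implies $x = 0$ or $y = 0$; $\mathcal{A}(M)$ is the set of atoms. $M$ is atomic if every element of $M$ is a sum of finitely many atoms (the empty sum being $0$). *)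

From mathcomp Require Import all_boot all_order all_algebra.
Set Implicit Arguments. Unset Strict Implicit. Unset Printing Implicit Defensive.
Import Order.TTheory GRing.Theory Num.Theory.
Local Open Scope ring_scope.

(* d(r): the denominator of r in lowest terms, as a natural number
   (mathcomp's [denq r] is the positive reduced denominator). *)
Definition dnat (r : rat) : nat := `|denq r|%N.

Definition gen_monoid (S : rat -> Prop) (x : rat) : Prop :=
  exists s : seq rat, (forall a, a \in s -> S a) /\ x = \sum_(a <- s) a.

Definition is_atom (M : rat -> Prop) (a : rat) : Prop :=
  M a /\ a != 0 /\
  forall x y, M x -> M y -> a = x + y -> x = 0 \/ y = 0.

Definition atomic (M : rat -> Prop) : Prop :=
  forall x, M x ->
    exists s : seq rat, (forall a, a \in s -> is_atom M a) /\ x = \sum_(a <- s) a.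

From mathcomp Require Import all_boot all_order all_algebra.
From mathcomp Require Import lra.
Import Order.TTheory GRing.Theory Num.Theory.
Set Implicit Arguments. Unset Strict Implicit. Unset Printing Implicit Defensive.
Local Open Scope ring_scope.

(* Write an element of M as a sum of generators. If the sum contains
   q_n it is at least q_n; otherwise the prime p_n does not divide its
   denominator, since p_n divides none of the denominators of the other
   generators and the property "p does not divide d(x)" is stable under
   addition. Hence a decomposition q_n = x + y can only be the trivial one,
   because p_n does divide d(q_n). Every generator being an atom, M is
   atomic, and no other element of M is an atom. *)

Lemma dnat_dvd (x : rat) (d z : int) : x * d%:~R = z%:~R -> (dnat x %| `|d|)%N.
Proof.
move=> xdz.
have num_den : z * denq x = numq x * d.
  by apply: (@intr_inj rat); rewrite !rmorphM /= numqE -xdz mulrAC.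
have : (dnat x %| `|numq x| * `|d|)%N by rewrite -abszM -num_den abszM dvdn_mull.
by rewrite Gauss_dvdr // coprime_sym coprime_num_den.
Qed.

Lemma dnatD_dvd (a b : rat) : (dnat (a + b) %| dnat a * dnat b)%N.
Proof.
rewrite -abszM; apply: (@dnat_dvd _ _ (numq a * denq b + numq b * denq a)).
rewrite rmorphM rmorphD !rmorphM /= !numqE mulrDl.
by rewrite mulrA [_ * (denq b)%:~R]mulrC !mulrA.
Qed.

Section PrimeNotDividingDenominator.

Variable p : nat.
Hypothesis p_prime : prime p.

Lemma prime_ndvd_dnatD (a b : rat) :
  ~~ (p %| dnat a)%N -> ~~ (p %| dnat b)%N -> ~~ (p %| dnat (a + b))%N.
Proof.
move=> pNa pNb; apply/negP => /dvdn_trans/(_ (dnatD_dvd a b)).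
by rewrite Euclid_dvdM // (negbTE pNa) (negbTE pNb).
Qed.

Lemma prime_ndvd_dnat_sum (s : seq rat) :
  (forall a, a \in s -> ~~ (p %| dnat a)%N) -> ~~ (p %| dnat (\sum_(a <- s) a))%N.
Proof.
move=> pNs; rewrite big_seq.
apply: (big_ind (fun x => ~~ (p %| dnat x)%N)) => //.
- by rewrite (_ : dnat 0 = 1%N) // dvdn1 neq_ltn prime_gt1 ?orbT.
- exact: prime_ndvd_dnatD.
Qed.

End PrimeNotDividingDenominator.

Lemma mem_le_sum (R : numDomainType) (s : seq R) (a : R) :
  (forall b, b \in s -> 0 <= b) -> a \in s -> a <= \sum_(b <- s) b.
Proof.
move=> s_ge0 sa; rewrite (perm_big _ (perm_to_rem sa)) big_cons lerDl.
by rewrite big_seq sumr_ge0 // => b /mem_rem /s_ge0.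
Qed.

Section GeneratedMonoid.

Variable S : rat -> Prop.

Lemma gen_monoid_gen (a : rat) : S a -> gen_monoid S a.
Proof. by move=> Sa; exists [:: a]; split; [move=> b /[!inE] /eqP -> | rewrite big_seq1]. Qed.

Lemma gen_monoid_ge0 (x : rat) :
  (forall a, S a -> 0 <= a) -> gen_monoid S x -> 0 <= x.
Proof. by move=> S_ge0 [s [Ss ->]]; rewrite big_seq sumr_ge0 // => a /Ss /S_ge0. Qed.

Lemma atom_gen_monoid_gen (a : rat) :
  (forall b, S b -> b != 0) -> is_atom (gen_monoid S) a -> S a.
Proof.
move=> S_neq0 [[[|b s] [Ss ->]] [sum_neq0 atom_sum]].
  by rewrite big_nil eqxx in sum_neq0.
have Sb : S b by apply: Ss; rewrite mem_head.
have Mrest : gen_monoid S (\sum_(c <- s) c).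
  by exists s; split=> // c cs; apply: Ss; rewrite inE cs orbT.
have [b0|rest0] := atom_sum _ _ (gen_monoid_gen Sb) Mrest (big_cons _ _ _ _ _ _).
  by have := S_neq0 _ Sb; rewrite b0 eqxx.
by rewrite big_cons rest0 addr0.
Qed.

Lemma atomic_gen_monoid :
  (forall a, S a -> is_atom (gen_monoid S) a) -> atomic (gen_monoid S).
Proof. by move=> S_atom x [s [Ss ->]]; exists s; split=> // a /Ss /S_atom. Qed.

End GeneratedMonoid.

Section PrimeSeparatedGenerators.

Variables (q : nat -> rat) (p : nat -> nat).
Hypothesis q_gt0 : forall n, (0 < n)%N -> 0 < q n.
Hypothesis p_prime : forall n, (0 < n)%N -> prime (p n).
Hypothesis p_dvd : forall n, (0 < n)%N -> (p n %| dnat (q n))%N.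
Hypothesis p_ndvd : forall n k, (0 < n)%N -> (0 < k)%N -> k <> n -> ~~ (p n %| dnat (q k))%N.

Let gens (x : rat) : Prop := exists2 n, (0 < n)%N & x = q n.

Lemma gens_gt0 (a : rat) : gens a -> 0 < a.
Proof. by case=> n n_gt0 ->; exact: q_gt0. Qed.

Lemma sum_gens_ndvd (n : nat) (s : seq rat) : (0 < n)%N ->
  (forall a, a \in s -> gens a) -> q n \notin s ->
  ~~ (p n %| dnat (\sum_(a <- s) a))%N.
Proof.
move=> n_gt0 s_gens qnNs; apply: (prime_ndvd_dnat_sum (p_prime n_gt0)) => a sa.
have [k k_gt0 a_qk] := s_gens a sa.
rewrite a_qk; apply: p_ndvd => // kn.
by rewrite -kn -a_qk sa in qnNs.
Qed.

Lemma gen_atom (n : nat) : (0 < n)%N -> is_atom (gen_monoid gens) (q n).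
Proof.
move=> n_gt0; split; first by apply: gen_monoid_gen; exists n.
split; first by rewrite gt_eqF // q_gt0.
have gens_ge0 a : gens a -> 0 <= a by move/gens_gt0/ltW.
move=> x y Mx My qn_xy.
have [x_ge0 y_ge0] := (gen_monoid_ge0 gens_ge0 Mx, gen_monoid_ge0 gens_ge0 My).
move: Mx My => [sx [sx_gens ->]] [sy [sy_gens ->]] in qn_xy x_ge0 y_ge0 *.
have sum_ge_qn s : (forall a, a \in s -> gens a) -> q n \in s -> q n <= \sum_(a <- s) a.
  by move=> s_gens; apply: mem_le_sum => a /s_gens /gens_ge0.
have [qn_sx|qnNsx] := boolP (q n \in sx).
  by right; have := sum_ge_qn _ sx_gens qn_sx; lra.
have [qn_sy|qnNsy] := boolP (q n \in sy).
  by left; have := sum_ge_qn _ sy_gens qn_sy; lra.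
have := prime_ndvd_dnatD (p_prime n_gt0) (sum_gens_ndvd n_gt0 sx_gens qnNsx)
  (sum_gens_ndvd n_gt0 sy_gens qnNsy).
by rewrite -qn_xy p_dvd.
Qed.

End PrimeSeparatedGenerators.

Theorem proposition3p5 (q : nat -> rat) (p : nat -> nat)
  (hq : forall n, (0 < n)%N -> 0 < q n)
  (hp : forall n, (0 < n)%N -> prime (p n))
  (hdiv : forall n, (0 < n)%N -> (p n %| dnat (q n))%N)
  (hndiv : forall n k, (0 < n)%N -> (0 < k)%N -> k <> n -> ~~ (p n %| dnat (q k))%N) :
  let M := gen_monoid (fun x => exists2 n, (0 < n)%N & x = q n) in
  atomic M /\
  (forall a, is_atom M a <-> exists2 n, (0 < n)%N & a = q n).
Proof.
move=> M.
have gens_atom a : (exists2 n, (0 < n)%N & a = q n) -> is_atom M a.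
  by case=> n n_gt0 ->; exact: (gen_atom hq hp hdiv hndiv n_gt0).
split; first exact: atomic_gen_monoid.
move=> a; split=> [|/gens_atom //].
by apply: atom_gen_monoid_gen => b /(gens_gt0 hq) /lt0r_neq0.
Qed.
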